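(* For any compact domain $\mathcal{K}\subset\mathbb{R}^{d_x}$, if $N<\max(d_x+1,d_y)$ then $\mathcal{N}_N(\sigma_\alpha)$ is not dense in $C(\mathcal{K},\mathbb{R}^{d_y})$ with respect to the uniform norm on $\mathcal{K}$; i.e., leaky-ReLU networks of width $N$ do not have the universal approximation property for $C(\mathcal{K},\mathbb{R}^{d_y})$.
   Context: Fix $\alpha\in\mathbb{R}^+\setminus\{1\}$ and let $\sigma_\alpha(x)=x$ for $x>0$ and $\sigma_\alpha(x)=\alpha x$ for $x\le 0$, applied coordinatewise (leaky-ReLU). A leaky-ReLU network of width $N$ and depth $L$ from $\mathbb{R}^{d_x}$ to $\mathbb{R}^{d_y}$ is a map $x\mapsto W_{L+1}\sigma_\alpha(W_L(\cdots\sigma_\alpha(W_1x+b_1)\cdots)+b_L)+b_{L+1}$ with $W_1\in\mathbb{R}^{N\times d_x}$, $W_i\in\mathbb{R}^{N\times N}$ for $2\le i\le L$, $b_i\in\mathbb{R}^N$ for $1\le i\le L$, $W_{L+1}\in\mathbb{R}^{d_y\times N}$, $b_{L+1}\in\mathbb{R}^{d_y}$. $\mathcal{N}_N(\sigma_\alpha)$ denotes the set of all such networks of width $N$ over all depths $L$. *)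

From HB Require Import structures.
From mathcomp Require Import all_boot all_order all_algebra.
From mathcomp Require Import all_classical all_reals all_analysis.
Set Implicit Arguments. Unset Strict Implicit. Unset Printing Implicit Defensive.
Import Order.TTheory GRing.Theory Num.Theory.
Import numFieldNormedType.Exports.
Local Open Scope ring_scope.
Local Open Scope classical_set_scope.

Definition leaky {R : realType} (alpha x : R) : R := if 0 < x then x else alpha * x.

Definition act {R : realType} (alpha : R) {N : nat} (v : 'cV[R]_N) : 'cV[R]_N :=
  map_mx (leaky alpha) v.

(* A leaky-ReLU network of width N and depth L = 1 + size hs:
   x |-> Wo * sigma(W_L( ... sigma(W1 x + b1) ...) + b_L) + bo,
   where hs lists the hidden layers (W_i, b_i), 2 <= i <= L. *)
Definition nn_eval {R : realType} (alpha : R) {dx dy N : nat}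
  (W1 : 'M[R]_(N, dx)) (b1 : 'cV[R]_N) (hs : seq ('M[R]_N * 'cV[R]_N))
  (Wo : 'M[R]_(dy, N)) (bo : 'cV[R]_dy) (x : 'cV[R]_dx) : 'cV[R]_dy :=
  Wo *m foldl (fun h p => act alpha (p.1 *m h + p.2)) (act alpha (W1 *m x + b1)) hs + bo.

Definition leaky_net {R : realType} (alpha : R) (dx dy N : nat)
  (f : 'cV[R]_dx -> 'cV[R]_dy) : Prop :=
  exists (W1 : 'M[R]_(N, dx)) (b1 : 'cV[R]_N) (hs : seq ('M[R]_N * 'cV[R]_N))
         (Wo : 'M[R]_(dy, N)) (bo : 'cV[R]_dy),
    forall x, f x = nn_eval alpha W1 b1 hs Wo bo x.

(* N_N(sigma_alpha) is dense in C(K, R^dy) w.r.t. the uniform norm on K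
   (the entrywise max norm on R^dy is used; all norms are equivalent). *)
Definition leaky_UAP {R : realType} (alpha : R) (dx dy N : nat)
  (K : set 'cV[R]_dx) : Prop :=
  forall g : 'cV[R]_dx -> 'cV[R]_dy, {within K, continuous g} ->
  forall eps : R, 0 < eps ->
  exists f, @leaky_net R alpha dx dy N f /\ forall x, K x -> `|f x - g x| < eps.

(* Fix a ball around x0 inside K and let g be the target whose i-th coordinate
   is the tent of radius d centred at c_i = x0 + (i+1) d e, so that g(x0) = 0
   and g(c_k) is the k-th unit vector. Let f be a width-N network within
   (4 dy)^-1 of g on the ball.
   If N < dy, some u <> 0 annihilates the output matrix, so u f is constant,
   whereas u g(c_k) - u g(x0) = u_k is too large when |u_k| is maximal.
   Otherwise N <= dx. As alpha > 0, a layer x |-> act (W x + b) with W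
   invertible is Lipschitz with a continuous inverse. So if some hidden weight
   matrix has a null vector v (the first one does when N < dx), f is constant
   on the preimage of a line of direction v: a connected unbounded set through
   c_0, hence meeting the sphere of radius d/2 around c_0, where the first tent
   is 1/2 instead of 1. Otherwise N = dx, and the first output coordinate is
   either constant on such a set or a continuous injection R^dx -> R, which
   cannot have the strict local maximum of a tent. *)

From HB Require Import structures.
From mathcomp Require Import all_boot all_order all_algebra.
From mathcomp Require Import all_classical all_reals all_analysis.
From mathcomp Require Import ring lra.

Set Implicit Arguments.
Unset Strict Implicit.
Unset Printing Implicit Defensive.
Import Order.TTheory GRing.Theory Num.Theory.
Import numFieldNormedType.Exports.
Local Open Scope ring_scope.
Local Open Scope classical_set_scope.

Section LeakyNetworks.
Variable R : realType.

Lemma mx_norm_entry_le m n (A : 'M[R]_(m, n)) i j : `|A i j| <= `|A|.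
Proof.
by rewrite [leRHS]/Num.Def.normr /= mx_normrE; apply/bigmax_geP; right; exists (i, j).
Qed.

Lemma mx_norm_le_entries m n (A : 'M[R]_(m, n)) e :
  0 <= e -> (forall i j, `|A i j| <= e) -> `|A| <= e.
Proof.
move=> e_ge0 Ae; rewrite [leLHS]/Num.Def.normr /= mx_normrE.
by apply: bigmax_le => // -[i j] _; exact: Ae.
Qed.

Lemma mx_norm_delta m n (i : 'I_m) (j : 'I_n) : `|delta_mx i j : 'M[R]_(m, n)| = 1.
Proof.
apply/eqP; rewrite eq_le mx_norm_le_entries //=; last first.
  by move=> k l; rewrite mxE; case: (_ && _); rewrite ?normr1 ?normr0.
by have := mx_norm_entry_le (delta_mx i j) i j; rewrite mxE !eqxx normr1.
Qed.

Lemma mx_norm_mul m n p (A : 'M[R]_(m, n)) (B : 'M[R]_(n, p)) :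
  `|A *m B| <= n%:R * `|A| * `|B|.
Proof.
apply: mx_norm_le_entries => [|i j]; first by rewrite !mulr_ge0.
rewrite mxE (le_trans (ler_norm_sum _ _ _)) //.
apply: (le_trans (y := \sum_(k < n) `|A| * `|B|)).
  by apply: ler_sum => k _; rewrite normrM ler_pM ?mx_norm_entry_le.
by rewrite sumr_const card_ord -mulrA mulr_natl.
Qed.

Lemma mulmx_null_or_tr_free m n (A : 'M[R]_(m, n)) :
  (exists2 v : 'cV[R]_n, v != 0 & A *m v = 0) \/ row_free A^T.
Proof.
have [|A_nfree] := boolP (row_free A^T); [by right | left].
have /rowV0Pn[w /sub_kermxP wA w_neq0] : kermx A^T != 0 by rewrite kermx_eq0.
exists w^T; first by rewrite trmx_eq0.
by rewrite -[A]trmxK -trmx_mul wA trmx0.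
Qed.

Lemma mulmx_null_vector m n (A : 'M[R]_(m, n)) :
  (m < n)%N -> exists2 v : 'cV[R]_n, v != 0 & A *m v = 0.
Proof.
move=> lt_mn; case: (mulmx_null_or_tr_free A) => // /eqP A_free.
by move: (rank_leq_row A); rewrite -mxrank_tr A_free leqNgt lt_mn.
Qed.

Lemma tr_free_mulmx_inj m n p (A : 'M[R]_(m, n)) :
  row_free A^T -> injective (fun B : 'M[R]_(n, p) => A *m B).
Proof.
move=> A_free B C /eqP; rewrite -subr_eq0 -mulmxBr -trmx_eq0 trmx_mul.
by rewrite (mulmx_free_eq0 _ A_free) trmx_eq0 subr_eq0 => /eqP.
Qed.

Lemma klipschitzP (U V : normedModType R) k (f : U -> V) :
  k.-lipschitz f <-> forall x y, `|f x - f y| <= k * `|x - y|.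
Proof. by split=> [f_lip x y | f_lip [x y] _]; [exact: (f_lip (x, y)) | exact: f_lip]. Qed.

Lemma klipschitz_continuous (U V : normedModType R) k (f : U -> V) :
  k.-lipschitz f -> continuous f.
Proof.
move=> /klipschitzP f_lip x; apply/cvgrPdist_lt => e e_gt0.
have k1_gt0 : 0 < Num.max k 1 by rewrite lt_max ltr01 orbT.
near=> y; apply: (le_lt_trans (f_lip x y)).
rewrite (le_lt_trans (y := Num.max k 1 * `|x - y|)) ?ler_wpM2r ?le_max ?lexx //.
rewrite -ltr_pdivlMl //; near: y; apply: cvgr_dist_lt => //.
by rewrite mulr_gt0 ?invr_gt0.
Unshelve. all: by end_near. Qed.

Lemma klipschitz_comp (U V W : normedModType R) (k l : R) (f : U -> V) (g : V -> W) :
  k.-lipschitz f -> l.-lipschitz g -> 0 <= l -> (l * k).-lipschitz (fun x => g (f x)).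
Proof.
move=> /klipschitzP f_lip /klipschitzP g_lip l_ge0; apply/klipschitzP => x y /=.
by rewrite (le_trans (g_lip (f x) (f y))) // -mulrA ler_wpM2l.
Qed.

Lemma affine_lipschitz m n p (A : 'M[R]_(m, n)) (B : 'M[R]_(m, p)) :
  (n%:R * `|A|).-lipschitz (fun X : 'M[R]_(n, p) => A *m X + B).
Proof.
apply/klipschitzP => X Y.
by rewrite opprD addrACA subrr addr0 -mulmxBr mx_norm_mul.
Qed.

Lemma leakyK (a : R) : 0 < a -> cancel (leaky a) (leaky a^-1).
Proof.
move=> a_gt0 x; rewrite /leaky; have [x_gt0|x_le0] := ltP 0 x; first by rewrite x_gt0.
have -> : (0 < a * x) = false by rewrite ltNge pmulr_rle0 // x_le0.
by rewrite mulKf ?gt_eqF.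
Qed.

Lemma leaky_lipschitz (a : R) : 0 < a -> (Num.max 1 a).-lipschitz (leaky a).
Proof.
move=> a_gt0; apply/klipschitzP => x y.
wlog le_yx : x y / y <= x.
  move=> wlog_le; have [/wlog_le //|/ltW/wlog_le] := leP y x.
  by rewrite distrC [`|y - x|]distrC.
have M_ge1 : 1 <= Num.max 1 a by rewrite le_max lexx.
have M_gea : a <= Num.max 1 a by rewrite le_max lexx orbT.
rewrite [`|x - y|]ger0_norm ?subr_ge0 // ler_norml /leaky.
by case: (ltP 0 x) => ?; case: (ltP 0 y) => ? /=; apply/andP; split; nra.
Qed.

Lemma actK (a : R) n : 0 < a -> cancel (@act R a n) (act a^-1).
Proof. by move=> a_gt0 v; apply/matrixP => i j; rewrite !mxE leakyK. Qed.

Lemma act_lipschitz (a : R) n : 0 < a -> (Num.max 1 a).-lipschitz (@act R a n).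
Proof.
move=> /leaky_lipschitz/klipschitzP leaky_lip; apply/klipschitzP => u v.
apply: mx_norm_le_entries => [|i j]; first by rewrite mulr_ge0 ?le_max ?ler01.
have := mx_norm_entry_le (u - v) i j; rewrite !mxE => uv_le.
by rewrite (le_trans (leaky_lip _ _)) // ler_wpM2l ?le_max ?ler01.
Qed.

Lemma dist_lipschitz (V : normedModType R) (x0 : V) : 1.-lipschitz (fun x => `|x - x0|).
Proof.
apply/klipschitzP => x y; rewrite mul1r (le_trans (ler_dist_dist _ _)) //.
by rewrite opprB addrA subrK.
Qed.

Lemma mx_entry_lipschitz m n (i : 'I_m) (j : 'I_n) :
  1.-lipschitz (fun A : 'M[R]_(m, n) => A i j).
Proof.
apply/klipschitzP => A B; rewrite mul1r.
by have := mx_norm_entry_le (A - B) i j; rewrite !mxE.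
Qed.

(* Lipschitz continuity makes the preimage of an unbounded set unbounded, and
   continuity of the inverse keeps the preimage of a line connected. *)
Definition lip_homeo n (G : 'cV[R]_n -> 'cV[R]_n) :=
  (exists2 k, 0 <= k & k.-lipschitz G) /\
  exists2 H, continuous H & cancel G H /\ cancel H G.

Lemma lip_homeo_id n : lip_homeo (@id 'cV[R]_n).
Proof.
split; first by exists 1 => //; exact: lipschitz_id.
by exists id => // x; exact: cvg_id.
Qed.

Lemma lip_homeo_comp n (G G' : 'cV[R]_n -> 'cV[R]_n) :
  lip_homeo G -> lip_homeo G' -> lip_homeo (fun x => G' (G x)).
Proof.
move=> [[k k_ge0 G_lip] [H H_cont [GK HK]]] [[l l_ge0 G'_lip] [H' H'_cont [G'K H'K]]].
split; first by exists (l * k); [exact: mulr_ge0 | exact: klipschitz_comp].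
exists (fun y => H (H' y)).
  by move=> y; apply: continuous_comp; [exact: H'_cont | exact: H_cont].
by split=> x /=; rewrite ?GK ?G'K ?H'K ?HK.
Qed.

Lemma lip_homeo_layer (a : R) n (W : 'M[R]_n) (b : 'cV[R]_n) :
  0 < a -> W \in unitmx -> lip_homeo (fun x => act a (W *m x + b)).
Proof.
move=> a_gt0 W_unit; have ai_gt0 : 0 < a^-1 by rewrite invr_gt0.
split.
  exists (Num.max 1 a * (n%:R * `|W|)); first by rewrite mulr_ge0 ?le_max ?ler01.
  by apply: klipschitz_comp (affine_lipschitz W b) (act_lipschitz a_gt0) _; rewrite le_max ler01.
exists (fun y => invmx W *m act a^-1 y + - (invmx W *m b)).
  apply: klipschitz_continuous.
  by apply: klipschitz_comp (act_lipschitz ai_gt0) (affine_lipschitz _ _) _.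
split=> [x | y]; first by rewrite actK // mulmxDr mulKmx ?addrK.
by rewrite mulmxDr mulmxN !mulKVmx // subrK -[X in act X]invrK actK.
Qed.

Definition fibre_meets_spheres (T : Type) m (Phi : 'cV[R]_m -> T) (x0 : 'cV[R]_m) :=
  forall s, 0 <= s -> exists2 x, `|x - x0| = s & Phi x = Phi x0.

Lemma fibre_meets_spheres_factor (T T' : Type) m (Phi : 'cV[R]_m -> T)
    (Psi : 'cV[R]_m -> T') x0 :
  (forall x, Phi x = Phi x0 -> Psi x = Psi x0) ->
  fibre_meets_spheres Phi x0 -> fibre_meets_spheres Psi x0.
Proof. by move=> PhiPsi Phi_fibre s /Phi_fibre[x xs /PhiPsi]; exists x. Qed.

Lemma lip_homeo_fibre_meets_spheres m n (G : 'cV[R]_n -> 'cV[R]_n)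
    (W : 'M[R]_(m, n)) (v x0 : 'cV[R]_n) :
  lip_homeo G -> v != 0 -> W *m v = 0 -> fibre_meets_spheres (fun x => W *m G x) x0.
Proof.
move=> [[k k_ge0 /klipschitzP G_lip] [H H_cont [GK HK]]] v_neq0 Wv s s_ge0.
have v_gt0 : 0 < `|v| by rewrite normr_gt0.
have line_lip : `|v|.-lipschitz (fun t : R => G x0 + t *: v).
  apply/klipschitzP => t t'.
  by rewrite opprD addrACA subrr add0r -scalerBl normrZ mulrC.
pose c := H \o (fun t => G x0 + t *: v).
pose rho := (fun y => `|y - x0|) \o c.
have /klipschitz_continuous line_cont := line_lip.
have /klipschitz_continuous dist_cont := dist_lipschitz x0.
have rho_cont : continuous rho.
  move=> t; apply: continuous_comp; last exact: dist_cont.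
  by apply: continuous_comp; [exact: line_cont | exact: H_cont].
pose T := s * (k + 1) / `|v|.
have T_ge0 : 0 <= T by rewrite divr_ge0 ?mulr_ge0 ?addr_ge0.
have far : s <= rho T.
  have k1_gt0 : 0 < k + 1 by rewrite ltr_wpDl.
  have := G_lip (c T) x0; rewrite /= HK addrAC subrr add0r normrZ ger0_norm //.
  rewrite divfK ?gt_eqF // => sk_le.
  rewrite -(ler_pM2r k1_gt0) (le_trans sk_le) // mulrC.
  by apply: ler_wpM2l; [exact: normr_ge0 | rewrite lerDl].
have [t _ rho_t] : exists2 t, t \in `[0, T]%R & rho t = s.
  apply: IVT T_ge0 (continuous_subspaceT rho_cont) _.
  by rewrite /rho /c /= scale0r addr0 GK subrr normr0 ge_min le_max s_ge0 far orbT.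
by exists (c t) => //=; rewrite HK mulmxDr -scalemxAr Wv scaler0 addr0.
Qed.

Definition layer (a : R) {n} (h : 'cV[R]_n) (p : 'M[R]_n * 'cV[R]_n) := act a (p.1 *m h + p.2).

Lemma layers_fibre_or_lip_homeo (a : R) n (hs : seq ('M[R]_n * 'cV[R]_n)) G x0 :
  0 < a -> lip_homeo G ->
  fibre_meets_spheres (fun x => foldl (layer a) (G x) hs) x0 \/
  lip_homeo (fun x => foldl (layer a) (G x) hs).
Proof.
move=> a_gt0; elim: hs G => [|[W b] hs IH] G G_homeo /=; first by right.
have [[v v_neq0 Wv]|W_free] := mulmx_null_or_tr_free W.
  left; apply: fibre_meets_spheres_factor (lip_homeo_fibre_meets_spheres x0 G_homeo v_neq0 Wv).
  by move=> x; rewrite /layer /= => ->.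
apply: IH; apply: lip_homeo_comp G_homeo (lip_homeo_layer _ a_gt0 _).
by rewrite -unitmx_tr -row_free_unit.
Qed.

Lemma nn_eval_left_kernel (a : R) dx dy N (W1 : 'M[R]_(N, dx)) b1 hs
    (Wo : 'M[R]_(dy, N)) bo :
  (N < dy)%N ->
  exists2 u : 'rV[R]_dy, u != 0 & forall x, u *m nn_eval a W1 b1 hs Wo bo x = u *m bo.
Proof.
move=> lt_N_dy; have [v v_neq0 Wo_v] := mulmx_null_vector Wo^T lt_N_dy.
exists v^T => [|x]; first by rewrite trmx_eq0.
by rewrite mulmxDr mulmxA -[Wo]trmxK -trmx_mul Wo_v trmx0 mul0mx add0r.
Qed.

Lemma nn_eval_fibre_meets_spheres (a : R) dx dy N (W1 : 'M[R]_(N, dx)) b1 hs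
    (Wo : 'M[R]_(dy, N)) bo x0 :
  (N < dx)%N -> fibre_meets_spheres (nn_eval a W1 b1 hs Wo bo) x0.
Proof.
move=> lt_N_dx; have [v v_neq0 W1v] := mulmx_null_vector W1 lt_N_dx.
apply: fibre_meets_spheres_factor (lip_homeo_fibre_meets_spheres x0 (lip_homeo_id _) v_neq0 W1v).
by rewrite /nn_eval => x /= ->.
Qed.

Lemma nn_eval_square_coord_fibre_or_inj (a : R) n dy (W1 : 'M[R]_n) b1 hs
    (Wo : 'M[R]_(dy, n)) bo (i : 'I_dy) x0 :
  0 < a ->
  fibre_meets_spheres (fun x => nn_eval a W1 b1 hs Wo bo x i 0) x0 \/
  continuous (fun x => nn_eval a W1 b1 hs Wo bo x i 0) /\
  injective (fun x => nn_eval a W1 b1 hs Wo bo x i 0).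
Proof.
move=> a_gt0; pose F x := foldl (layer a) x ((W1, b1) :: hs).
have [F_fibre|F_homeo] :=
  layers_fibre_or_lip_homeo ((W1, b1) :: hs) x0 a_gt0 (lip_homeo_id n).
  by left; apply: fibre_meets_spheres_factor F_fibre; rewrite /nn_eval => x /= ->.
have [[v v_neq0 Wo_v]|Wo_free] := mulmx_null_or_tr_free (row i Wo).
  left; apply: fibre_meets_spheres_factor
    (lip_homeo_fibre_meets_spheres x0 F_homeo v_neq0 Wo_v) => x Fx.
  have : row i (Wo *m F x + bo) = row i (Wo *m F x0 + bo).
    by rewrite !linearD /= !row_mul Fx.
  by move/matrixP/(_ 0 0); rewrite !mxE.
move: F_homeo => [[k k_ge0 F_lip] [H _ [FK _]]]; right; split.
  have coord_lip := klipschitz_comp (affine_lipschitz Wo bo) (mx_entry_lipschitz i 0) ler01.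
  have coord_ge0 : 0 <= 1 * (n%:R * `|Wo|) by rewrite mul1r mulr_ge0.
  exact: klipschitz_continuous (klipschitz_comp F_lip coord_lip coord_ge0).
move=> x y xy; rewrite -(FK x) -(FK y); congr H; apply: (tr_free_mulmx_inj Wo_free).
have : row i (Wo *m F x + bo) = row i (Wo *m F y + bo).
  by apply/matrixP => ? ?; rewrite !ord1 mxE [RHS]mxE.
by rewrite !linearD /= !row_mul => /addIr.
Qed.

Definition tent m (c : 'cV[R]_m) (d : R) (x : 'cV[R]_m) : R :=
  Num.max 0 (1 - `|x - c| / d).

Definition tents {dx} dy (x0 e : 'cV[R]_dx) (d : R) (x : 'cV[R]_dx) : 'cV[R]_dy :=
  \col_(i < dy) tent (x0 + (i.+1%:R * d) *: e) d x.

Lemma max0_dist_le (a b : R) : `|Num.max 0 a - Num.max 0 b| <= `|a - b|.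
Proof.
have := ler_norm (a - b); have := ler_norm (b - a); rewrite distrC => ? ?.
by rewrite ler_norml; case: (leP 0 a); case: (leP 0 b) => ? ? /=; apply/andP; split; lra.
Qed.

Lemma tent_lipschitz m (c : 'cV[R]_m) d : 0 < d -> (d^-1).-lipschitz (tent c d).
Proof.
move=> d_gt0; apply/klipschitzP => x y; rewrite (le_trans (max0_dist_le _ _)) //.
have -> : 1 - `|x - c| / d - (1 - `|y - c| / d) = d^-1 * (`|y - c| - `|x - c|) by ring.
rewrite normrM gtr0_norm ?invr_gt0 // ler_pM2l ?invr_gt0 // distrC.
by have /klipschitzP/(_ x y) := dist_lipschitz c; rewrite mul1r.
Qed.

Lemma tentE m (c x : 'cV[R]_m) d :
  0 < d -> `|x - c| <= d -> tent c d x = 1 - `|x - c| / d.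
Proof. by move=> d_gt0 xc_le; rewrite /tent max_r // subr_ge0 ler_pdivrMr ?mul1r. Qed.

Lemma tent_center m (c : 'cV[R]_m) d : tent c d c = 1.
Proof. by rewrite /tent subrr normr0 mul0r subr0 max_r ?ler01. Qed.

Lemma tent_half m (c x : 'cV[R]_m) d : 0 < d -> `|x - c| = d / 2 -> tent c d x = 2^-1.
Proof.
move=> d_gt0 xc_half; have xc_le : `|x - c| <= d.
  by rewrite xc_half ler_pdivrMr ?ler_peMr ?ler1n ?ltW.
by rewrite tentE // xc_half mulrAC divff ?gt_eqF // mul1r; field.
Qed.

Lemma tent_eq0 m (c x : 'cV[R]_m) d : 0 < d -> d <= `|x - c| -> tent c d x = 0.
Proof. by move=> d_gt0 xc_ge; rewrite /tent max_l // subr_le0 ler_pdivlMr ?mul1r. Qed.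

Lemma tents_lipschitz dx dy (x0 e : 'cV[R]_dx) d :
  0 < d -> (d^-1).-lipschitz (tents dy x0 e d).
Proof.
move=> d_gt0; apply/klipschitzP => x y; apply: mx_norm_le_entries => [|i j].
  by rewrite mulr_ge0 // invr_ge0 ltW.
by rewrite !mxE; move/klipschitzP: (tent_lipschitz (x0 + (i.+1%:R * d) *: e) d_gt0).
Qed.

Lemma natr_dist_ge1 (i j : nat) : i != j -> 1 <= `|i%:R - j%:R| :> R.
Proof.
move=> neq_ij; case: (ltngtP i j) neq_ij => // lt_ij _; last first.
  rewrite ger0_norm; last by rewrite subr_ge0 ler_nat ltnW.
  by rewrite lerBrDr nat1r ler_nat.
rewrite distrC ger0_norm; last by rewrite subr_ge0 ler_nat ltnW.
by rewrite lerBrDr nat1r ler_nat.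
Qed.

Section TentObstructions.
Variables (dx dy : nat) (x0 e : 'cV[R]_dx) (d : R) (f : 'cV[R]_dx -> 'cV[R]_dy).
Hypotheses (dy_gt0 : (0 < dy)%N) (d_gt0 : 0 < d) (e_norm1 : `|e| = 1).
Hypothesis f_approx : forall x, `|x - x0| < dy.+1%:R * d ->
  `|f x - tents dy x0 e d x| < (4 * dy%:R)^-1.

Let p (i : 'I_dy) : 'cV[R]_dx := x0 + (i.+1%:R * d) *: e.

Let eps_le : (4 * dy%:R)^-1 <= 4^-1 :> R.
Proof. by rewrite lef_pV2 ?posrE ?mulr_gt0 ?ltr0n // ler_peMr // ler1n. Qed.

Let p_dist i j : `|p i - p j| = `|i%:R - j%:R| * d.
Proof.
rewrite opprD addrACA subrr add0r -scalerBl normrZ e_norm1 mulr1 -mulrBl normrM.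
by rewrite (gtr0_norm d_gt0) -!natr1 opprD addrACA subrr addr0.
Qed.

Let p_x0_dist i : `|p i - x0| = i.+1%:R * d.
Proof. by rewrite addrAC subrr add0r normrZ e_norm1 mulr1 ger0_norm ?mulr_ge0 ?ltW. Qed.

Let tents_p k : tents dy x0 e d (p k) = delta_mx k 0.
Proof.
apply/matrixP => i j; rewrite !mxE ord1 eqxx andbT eq_sym.
rewrite -/(p i); have [->|neq_ki] := eqVneq k i.
  by rewrite tent_center.
by rewrite tent_eq0 // p_dist ler_peMl ?natr_dist_ge1 ?ltW.
Qed.

Let tents_x0 : tents dy x0 e d x0 = 0.
Proof.
apply/matrixP => i j; rewrite !mxE tent_eq0 // distrC p_x0_dist.
by rewrite ler_peMl ?ler1n ?ltW.
Qed.

Let coord_approx i x : `|x - p i| <= d / 2 ->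
  `|f x i 0 - tent (p i) d x| < (4 * dy%:R)^-1.
Proof.
move=> x_near; have := mx_norm_entry_le (f x - tents dy x0 e d x) i 0.
rewrite !mxE => /le_lt_trans; apply; apply: f_approx.
rewrite -(subrK (p i) x) -addrA (le_lt_trans (ler_normD _ _)) // p_x0_dist.
have i_le : i.+1%:R * d <= dy%:R * d by rewrite ler_pM2r // ler_nat.
have -> : dy.+1%:R * d = dy%:R * d + d by rewrite -natr1 mulrDl mul1r.
have := d_gt0; lra.
Qed.

Lemma tents_no_left_kernel (u : 'rV[R]_dy) :
  u != 0 -> ~ (forall x, u *m f x = u *m f x0).
Proof.
move=> u_neq0 u_const; have u_gt0 : 0 < `|u| by rewrite normr_gt0.
have [[i k] /= uk] := mx_norm_neq0 (lt0r_neq0 u_gt0).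
have {}uk : `|u| = `|u 0 k| by rewrite [i]ord1 in uk.
pose w x := tents dy x0 e d x - f x.
have w_lt x : `|x - x0| < dy.+1%:R * d -> `|w x| < (4 * dy%:R)^-1.
  by move=> /f_approx; rewrite distrC.
have wk : `|w (p k)| < (4 * dy%:R)^-1.
  by apply: w_lt; rewrite p_x0_dist ltr_pM2r // ltr_nat ltnS ltn_ord.
have w0 : `|w x0| < (4 * dy%:R)^-1 by apply: w_lt; rewrite subrr normr0 mulr_gt0.
have uw : u *m (w (p k) - w x0) = u *m delta_mx k 0.
  by rewrite /w !mulmxBr tents_p tents_x0 u_const mulmx0 sub0r opprK subrK.
have dyw : dy%:R * `|w (p k) - w x0| < 2^-1.
  have -> : 2^-1 = dy%:R * (2 * (4 * dy%:R)^-1) :> R.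
    by field; rewrite pnatr_eq0 -lt0n dy_gt0.
  rewrite ltr_pM2l ?ltr0n // (le_lt_trans (ler_normB _ _)) //; lra.
have : `|u| < `|u| / 2.
  have u_col : `|u| = `|(u *m delta_mx k 0 : 'M[R]_1) 0 0| by rewrite -colE mxE.
  rewrite [X in X < _]u_col -uw (le_lt_trans (mx_norm_entry_le _ 0 0)) //.
  rewrite (le_lt_trans (mx_norm_mul _ _)) //.
  by rewrite [_ * `|u|]mulrC -mulrA ltr_pM2l.
lra.
Qed.

Lemma tents_no_coord_fibre i : ~ fibre_meets_spheres (fun x => f x i 0) (p i).
Proof.
have d2_ge0 : 0 <= d / 2 by rewrite divr_ge0 ?ltW.
move=> /(_ _ d2_ge0) [x xd fx].
have := @coord_approx i (p i); rewrite subrr normr0 tent_center => /(_ d2_ge0).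
have := @coord_approx i x; rewrite xd lexx (tent_half d_gt0 xd) fx => /(_ isT).
by rewrite !ltr_norml; have := eps_le; lra.
Qed.

Lemma tents_coord_not_inj i :
  continuous (fun x => f x i 0) -> ~ injective (fun x => f x i 0).
Proof.
move=> phi_cont phi_inj.
pose psi := (fun x => f x i 0) \o (fun s => p i + s *: e).
have line_lip : 1.-lipschitz (fun s : R => p i + s *: e).
  apply/klipschitzP => s t.
  by rewrite opprD addrACA subrr add0r -scalerBl normrZ e_norm1 mulr1 mul1r.
have /klipschitz_continuous line_cont := line_lip.
have psi_cont : continuous psi.
  by move=> s; apply: continuous_comp; [exact: line_cont | exact: phi_cont].
have psi_inj : injective psi.
  move=> s t /= /phi_inj/addrI/eqP; rewrite -subr_eq0 -scalerBl scaler_eq0.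
  have e_neq0 : e != 0 by rewrite -normr_eq0 e_norm1 oner_eq0.
  by rewrite (negbTE e_neq0) orbF subr_eq0 => /eqP.
have psi_val s : `|s| = d / 2 -> `|psi s - 2^-1| < (4 * dy%:R)^-1.
  have ps_dist : `|p i + s *: e - p i| = `|s| by rewrite addrAC subrr add0r normrZ e_norm1 mulr1.
  move=> sd; rewrite /psi /= -(tent_half d_gt0 (etrans ps_dist sd)).
  by apply: coord_approx; rewrite ps_dist sd.
have psi0 : `|psi 0 - 1| < (4 * dy%:R)^-1.
  have := @coord_approx i (p i); rewrite subrr normr0 tent_center /psi /= scale0r addr0.
  by apply; rewrite divr_ge0 ?ltW.
have d2_gt0 : 0 < d / 2 by rewrite divr_gt0.
have psi_pos := psi_val _ (gtr0_norm d2_gt0).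
have psi_neg : `|psi (- (d / 2)) - 2^-1| < (4 * dy%:R)^-1.
  by apply: psi_val; rewrite normrN gtr0_norm.
have [up|down] := itv_continuous_inj_mono (I := `]-oo, +oo[%R)
  (continuous_subspaceT psi_cont) (in2W psi_inj).
  have := up 0 (d / 2); rewrite !in_itv /= => /(_ isT isT d2_gt0).
  by move: psi0 psi_pos; rewrite !ltr_norml; have := eps_le; lra.
have := down 0 (- (d / 2)); rewrite !in_itv /= oppr_lt0 => /(_ isT isT d2_gt0).
by move: psi0 psi_neg; rewrite !ltr_norml; have := eps_le; lra.
Qed.

End TentObstructions.

Lemma leaky_UAP_tents (a : R) dx dy N (K : set 'cV[R]_dx) (x0 e : 'cV[R]_dx) d eps :
  0 < eps -> 0 < d -> (forall x, `|x - x0| < dy.+1%:R * d -> K x) ->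
  leaky_UAP a dy N K ->
  exists W1 b1 hs (Wo : 'M[R]_(dy, N)) bo, forall x, `|x - x0| < dy.+1%:R * d ->
    `|nn_eval a W1 b1 hs Wo bo x - tents dy x0 e d x| < eps.
Proof.
move=> eps_gt0 d_gt0 near_K UAP.
have /klipschitz_continuous tents_cont := tents_lipschitz dy x0 e d_gt0.
have [f [[W1 [b1 [hs [Wo [bo f_def]]]]] f_approx]] :=
  UAP _ (continuous_subspaceT tents_cont) _ eps_gt0.
by exists W1, b1, hs, Wo, bo => x /near_K/f_approx; rewrite f_def.
Qed.

End LeakyNetworks.

Theorem lemma2p3 (R : realType) (alpha : R) (dx dy N : nat)
  (K : set 'cV[R]_dx) :
  0 < alpha -> alpha != 1 -> (0 < dx)%N -> (0 < dy)%N ->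
  compact K -> interior K !=set0 ->
  (N < maxn dx.+1 dy)%N ->
  ~ @leaky_UAP R alpha dx dy N K.
Proof.
move=> a_gt0 _ dx_gt0 dy_gt0 _ [x0 /nbhs_normP[r /= r_gt0 ball_K]] N_lt UAP.
pose d := r / dy.+1%:R.
have d_gt0 : 0 < d by rewrite divr_gt0.
have near_K x : `|x - x0| < dy.+1%:R * d -> K x.
  by rewrite mulrC divfK ?pnatr_eq0 // => xr; apply: ball_K; rewrite /ball_ /= distrC.
have eps_gt0 : 0 < (4 * dy%:R)^-1 :> R by rewrite invr_gt0 mulr_gt0 ?ltr0n.
pose e : 'cV[R]_dx := delta_mx (Ordinal dx_gt0) 0.
have e_norm1 : `|e| = 1 := mx_norm_delta _ _ _.
have [W1 [b1 [hs [Wo [bo f_approx]]]]] := leaky_UAP_tents e eps_gt0 d_gt0 near_K UAP.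
pose i0 : 'I_dy := Ordinal dy_gt0.
have [N_lt_dy|dy_le_N] := ltnP N dy.
  have [u u_neq0 u_const] := nn_eval_left_kernel alpha W1 b1 hs Wo bo N_lt_dy.
  by apply: (tents_no_left_kernel dy_gt0 d_gt0 e_norm1 f_approx u_neq0) => x; rewrite !u_const.
have N_le_dx : (N <= dx)%N by move: N_lt; rewrite leq_max ltnS ltnNge dy_le_N orbF.
have [N_lt_dx|dx_le_N] := ltnP N dx.
  apply: (tents_no_coord_fibre dy_gt0 d_gt0 e_norm1 f_approx (i := i0)).
  apply: fibre_meets_spheres_factor (nn_eval_fibre_meets_spheres alpha W1 b1 hs Wo bo _ N_lt_dx).
  by move=> x /= ->.
have N_eq_dx : N = dx by apply/eqP; rewrite eqn_leq N_le_dx.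
subst N; have [fibre|[cont inj]] :=
  nn_eval_square_coord_fibre_or_inj W1 b1 hs Wo bo i0 (x0 + (i0.+1%:R * d) *: e) a_gt0.
  exact: (tents_no_coord_fibre dy_gt0 d_gt0 e_norm1 f_approx (i := i0)) fibre.
exact: (tents_coord_not_inj dy_gt0 d_gt0 e_norm1 f_approx (i := i0)) cont inj.
Qed.
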